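(* Let $F$ be a totally real abelian number field, let $r\ge1$ and let $d_{1},\dots,d_{r},d$ be odd square-free positive integers such that $K=F(\sqrt{d_{1}},\dots,\sqrt{d_{r}},\sqrt{-d})$ satisfies $[K:F]=2^{r+1}$ and $\sqrt{2}\notin K$. Let $G_r=\langle\tau\rangle$ be the group of order $2$ acting on $E_{K_\infty}$ and on $E_{K_\infty^+}$ as described in the context. If $W_{K_{\infty}}(2)=\{\pm1\}$ and $(E_{K_{\infty}}:E_{K_{\infty}^{+}}W_{K_{\infty}})=1$, then $H^{i}(G_{r},E_{K_{\infty}})\cong H^{i}(G_{r},E_{K_{\infty}^{+}})$ for $i=1$ and $i=2$.
   Context: $K_\infty=\bigcup_n K_n$ is the cyclotomic $\mathbb{Z}_2$-extension of $K$, $K_\infty^{+}$ its maximal real subfield (the cyclotomic $\mathbb{Z}_2$-extension of $K^+=F(\sqrt{d_1},\dots,\sqrt{d_r})$); $E_{K_\infty}$, $E_{K_\infty^+}$ are the unit groups (unions of the unit groups of the layers), $W_{K_\infty}$ is the group of roots of unity of $K_\infty$ and $W_{K_\infty}(2)$ its Sylow $2$-subgroup. Put $K^{(r-1)}=F(\sqrt{d_1},\dots,\sqrt{d_{r-1}})$, $t_r=d_rd$, and let $K^{(r-1)}_\infty$ be the cyclotomic $\mathbb{Z}_2$-extension of $K^{(r-1)}$. $G_r=\mathrm{Gal}(F(\sqrt{d_1},\dots,\sqrt{d_r})/K^{(r-1)})$, identified with $\mathrm{Gal}(K_\infty/K^{(r-1)}_\infty(\sqrt{-t_r}))$ (whose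 generator $\tau$ restricts to the generator of $\mathrm{Gal}(K^+_\infty/K^{(r-1)}_\infty)$); it acts on $E_{K_\infty}$ and $E_{K_\infty^+}$ by Galois action. $H^i$ denotes (Tate) cohomology of the cyclic group $G_r$. *)

(* number fields are modelled as subfields of algC,
   the algebraic closure of Q (algebraic complex numbers). *)
From mathcomp Require Import all_boot all_order all_algebra all_field.
Set Implicit Arguments. Unset Strict Implicit. Unset Printing Implicit Defensive.
Import Order.TTheory GRing.Theory Num.Theory.
Local Open Scope ring_scope.

Definition is_subfield (P : algC -> Prop) : Prop :=
  [/\ P 0, P 1,
      (forall x y, P x -> P y -> P (x - y)),
      (forall x y, P x -> P y -> P (x * y)) &
      (forall x, P x -> x != 0 -> P x^-1)].

Definition genF (P S : algC -> Prop) : algC -> Prop :=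
  fun x => forall Q, is_subfield Q -> (forall y, P y -> Q y) ->
                     (forall y, S y -> Q y) -> Q x.

Definition Qfield : algC -> Prop := fun x => x \in Crat.

Definition is_basis (P L : algC -> Prop) (s : seq algC) : Prop :=
  [/\ (forall v, v \in s -> L v),
      (forall x, L x -> exists c : seq algC,
          size c = size s /\ (forall a, a \in c -> P a) /\
          x = \sum_(i < size s) c`_i * s`_i) &
      (forall c : seq algC, size c = size s -> (forall a, a \in c -> P a) ->
          \sum_(i < size s) c`_i * s`_i = 0 -> forall i, c`_i = 0)].

Definition ext_degree (P L : algC -> Prop) (n : nat) : Prop :=
  exists s : seq algC, size s = n /\ is_basis P L s.

Definition number_field (F : algC -> Prop) : Prop :=
  is_subfield F /\ exists n, ext_degree Qfield F n.

(* every embedding of F into C (= restriction of an automorphism of algC)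
   lands in the reals *)
Definition totally_real (F : algC -> Prop) : Prop :=
  forall (s : {rmorphism algC -> algC}) x, F x -> s x \is Num.real.

(* F/Q is Galois (normal) with abelian Galois group *)
Definition abelian_field (F : algC -> Prop) : Prop :=
  (forall (s : {rmorphism algC -> algC}) x, F x -> F (s x)) /\
  (forall (s t : {rmorphism algC -> algC}) x, F x -> s (t x) = t (s x)).

Definition squarefree (n : nat) : Prop :=
  forall p, prime p -> ~~ (p * p %| n)%N.

(* the cyclotomic Z_2-extension Q_oo of Q: generated by the zeta + zeta^-1
   for zeta a 2-power root of unity *)
Definition Qcyc2 : algC -> Prop :=
  genF Qfield (fun y => exists z : algC, exists n, z ^+ (2 ^ n) = 1 /\ y = z + z^-1).

(* cyclotomic Z_2-extension of L : the compositum L.Q_oo *)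
Definition Z2cyc (L : algC -> Prop) : algC -> Prop := genF L Qcyc2.

Definition units_of (L : algC -> Prop) : algC -> Prop :=
  fun x => [/\ L x, x != 0, x \in Aint & x^-1 \in Aint].

Definition roots_of_unity (L : algC -> Prop) : algC -> Prop :=
  fun x => L x /\ exists n, (0 < n)%N /\ x ^+ n = 1.

Definition roots_of_unity2 (L : algC -> Prop) : algC -> Prop :=
  fun x => L x /\ exists n, x ^+ (2 ^ n) = 1.

(* A/B ~= A'/B' as abstract groups, where B <= A and B' <= A' are
   subgroups of the multiplicative group algC^x *)
Definition quot_iso (A B A' B' : algC -> Prop) : Prop :=
  exists f : algC -> algC,
    [/\ (forall x, A x -> A' (f x)),
        (forall x y, A x -> A y -> B' (f (x * y) / (f x * f y))),
        (forall x, A x -> (B' (f x) <-> B x)) &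
        (forall x', A' x' -> exists x, A x /\ B' (x' / f x))].

(* Tate cohomology of the cyclic group <s> of order 2 acting on a
   multiplicative module M:
   H^1 = {x | x * s x = 1} / {y / s y},   H^2 = hat-H^0 = M^s / {y * s y} *)
Definition Z1 (s : algC -> algC) (M : algC -> Prop) : algC -> Prop :=
  fun x => M x /\ x * s x = 1.
Definition B1 (s : algC -> algC) (M : algC -> Prop) : algC -> Prop :=
  fun x => exists y, M y /\ x = y / s y.
Definition Z2 (s : algC -> algC) (M : algC -> Prop) : algC -> Prop :=
  fun x => M x /\ s x = x.
Definition B2 (s : algC -> algC) (M : algC -> Prop) : algC -> Prop :=
  fun x => exists y, M y /\ x = y * s y.

Definition H_iso (i : nat) (s : algC -> algC) (M N : algC -> Prop) : Prop :=
  if i == 1%N then quot_iso (Z1 s M) (B1 s M) (Z1 s N) (B1 s N)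
  else quot_iso (Z2 s M) (B2 s M) (Z2 s N) (B2 s N).

(* Both cohomology groups of a group of order 2 are killed by 2, and
   E_{K_oo} = E_{K_oo^+} W_{K_oo} with W_{K_oo}(2) = {+-1}: every unit of K_oo
   therefore has an odd power in E_{K_oo^+}.  Sending a class to an odd power of
   a representative lying in E_{K_oo^+} is then well defined modulo coboundaries
   (it agrees with the identity on a 2-torsion group) and inverts the map
   induced by the inclusion E_{K_oo^+} <= E_{K_oo}. *)

From mathcomp Require Import all_boot all_order all_algebra all_field.
From Stdlib Require Import Classical ClassicalEpsilon.
From mathcomp Require Import ring.
Set Implicit Arguments. Unset Strict Implicit. Unset Printing Implicit Defensive.
Import Order.TTheory GRing.Theory Num.Theory.
Local Open Scope ring_scope.

Definition is_subgroup (P : algC -> Prop) : Prop :=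
  [/\ P 1, (forall x y, P x -> P y -> P (x * y)) & (forall x, P x -> P x^-1)].

Section Subgroup.

Variable P : algC -> Prop.
Hypothesis subP : is_subgroup P.

Lemma subgroupX x n : P x -> P (x ^+ n).
Proof.
have [P1 PM _] := subP; move=> Px.
by elim: n => [|n IHn]; rewrite ?expr0 // exprS; apply: PM.
Qed.

Lemma subgroup_div x y : P x -> P y -> P (x / y).
Proof. by have [_ PM PV] := subP => Px Py; apply: PM => //; apply: PV. Qed.

Lemma subgroup_odd_exp_div x k : odd k -> x != 0 -> P (x ^+ 2) -> P (x ^+ k / x).
Proof.
move=> ok nz_x Px2.
have -> : x ^+ k = x * (x ^+ 2) ^+ k./2.
  by rewrite -exprM -exprS -{1}(odd_double_half k) ok -muln2 mulnC.
by rewrite [x * _]mulrC mulfK //; apply: subgroupX.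
Qed.

Lemma subgroup_odd_root x k : odd k -> x != 0 -> P (x ^+ 2) -> P (x ^+ k) -> P x.
Proof.
move=> ok nz_x Px2 Pxk.
have -> : x = x ^+ k / (x ^+ k / x) by rewrite invf_div mulrC divfK ?expf_neq0.
by apply: subgroup_div => //; apply: subgroup_odd_exp_div.
Qed.

End Subgroup.

Lemma quot_iso_odd_power (A B A' B' : algC -> Prop) :
  is_subgroup A -> is_subgroup B -> is_subgroup A' ->
  (forall x, A x -> x != 0) ->
  (forall x, A' x -> A x) -> (forall x, B' x -> B x) ->
  (forall x, A x -> B (x ^+ 2)) ->
  (forall x, A x -> exists2 k, odd k & A' (x ^+ k)) ->
  (forall x, A' x -> B x -> B' x) ->
  quot_iso A B A' B'.
Proof.
move=> subA subB subA' nzA A'A B'B sqrB oddA' A'B_B'.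
have [_ AM _] := subA; have [_ BM BV] := subB; have [_ A'M _] := subA'.
have [kf kfP] : exists kf : algC -> nat,
    forall x, A x -> odd (kf x) /\ A' (x ^+ kf x).
  apply: (ClassicalEpsilon.choice (fun x k => A x -> odd k /\ A' (x ^+ k))) => x.
  have [Ax | nAx] := classic (A x); last by exists 0%N.
  by have [k ok A'xk] := oddA' x Ax; exists k.
pose f x := x ^+ kf x.
have A'f x : A x -> A' (f x) by case/kfP.
have nz_f x : A x -> f x != 0 by move=> Ax; apply/nzA/A'A/A'f.
have Bf x : A x -> B (f x / x).
  by move=> Ax; apply: subgroup_odd_exp_div; [|case/kfP: Ax|apply: nzA|apply: sqrB].
exists f; split => [x|x y Ax Ay|x Ax|x' A'x'].
- exact: A'f.
- apply: A'B_B'; first by apply: subgroup_div; [|apply: A'f; apply: AM|apply: A'M; apply: A'f].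
  have -> : f (x * y) / (f x * f y) = f (x * y) / (x * y) / (f x / x * (f y / y)).
    by field; rewrite ?mulf_neq0 ?nz_f ?nzA.
  by apply: subgroup_div; [|apply: Bf; apply: AM|apply: BM; apply: Bf].
- split=> [B'fx | Bx].
    have -> : x = f x / (f x / x) by rewrite invf_div mulrC divfK ?nz_f.
    by apply: subgroup_div => //; [apply: B'B | apply: Bf].
  apply: A'B_B'; first exact: A'f.
  by rewrite -[f x](divfK (nzA x Ax)) mulrC; apply: BM => //; apply: Bf.
- exists x'; split; first exact: A'A.
  apply: A'B_B'; first by apply: subgroup_div => //; apply/A'f/A'A.
  by rewrite -invf_div; apply/BV/Bf/A'A.
Qed.

Section TateCohomology.

Variable s : {rmorphism algC -> algC}.

Section Cocycles.

Variable N : algC -> Prop.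
Hypothesis subN : is_subgroup N.

Lemma Z1_subgroup : is_subgroup (Z1 s N).
Proof.
have [N1 NM NV] := subN; split.
- by split=> //; rewrite rmorph1 mulr1.
- move=> x y [Nx hx] [Ny hy]; split; first exact: NM.
  by rewrite rmorphM mulrACA hx hy mulr1.
- move=> x [Nx hx]; split; first exact: NV.
  by rewrite fmorphV -invfM hx invr1.
Qed.

Lemma B1_subgroup : is_subgroup (B1 s N).
Proof.
have [N1 NM NV] := subN; split.
- by exists 1; rewrite rmorph1 invr1 mulr1.
- move=> _ _ [x [Nx ->]] [y [Ny ->]]; exists (x * y); split; first exact: NM.
  by rewrite rmorphM invfM mulrACA.
- move=> _ [x [Nx ->]]; exists x^-1; split; first exact: NV.
  by rewrite fmorphV invf_div invrK mulrC.
Qed.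

Lemma Z2_subgroup : is_subgroup (Z2 s N).
Proof.
have [N1 NM NV] := subN; split.
- by split=> //; rewrite rmorph1.
- move=> x y [Nx hx] [Ny hy]; split; first exact: NM.
  by rewrite rmorphM hx hy.
- move=> x [Nx hx]; split; first exact: NV.
  by rewrite fmorphV hx.
Qed.

Lemma B2_subgroup : is_subgroup (B2 s N).
Proof.
have [N1 NM NV] := subN; split.
- by exists 1; rewrite rmorph1 mulr1.
- move=> _ _ [x [Nx ->]] [y [Ny ->]]; exists (x * y); split; first exact: NM.
  by rewrite rmorphM mulrACA.
- move=> _ [x [Nx ->]]; exists x^-1; split; first exact: NV.
  by rewrite fmorphV invfM.
Qed.

End Cocycles.

Lemma Z1_neq0 N x : Z1 s N x -> x != 0.
Proof. by case=> _ hx; apply: contra_eq_neq hx => ->; rewrite mul0r eq_sym oner_eq0. Qed.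

Lemma Z1_sqr_B1 N x : Z1 s N x -> B1 s N (x ^+ 2).
Proof.
move=> Zx; have [Nx hx] := Zx; exists x; split=> //.
have -> : s x = x^-1 by apply: (mulfI (Z1_neq0 Zx)); rewrite hx divff ?(Z1_neq0 Zx).
by rewrite invrK expr2.
Qed.

Lemma Z2_sqr_B2 N x : Z2 s N x -> B2 s N (x ^+ 2).
Proof. by case=> Nx hx; exists x; split=> //; rewrite hx expr2. Qed.

Variables M N : algC -> Prop.
Hypotheses (subM : is_subgroup M) (subN : is_subgroup N).
Hypothesis nzM : forall x, M x -> x != 0.
Hypothesis NM : forall x, N x -> M x.
Hypothesis odd_powerN : forall x, M x -> exists2 k, odd k & N (x ^+ k).

Lemma H1_quot_iso : quot_iso (Z1 s M) (B1 s M) (Z1 s N) (B1 s N).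
Proof.
apply: quot_iso_odd_power; rewrite /Z1 /B1.
- exact: Z1_subgroup.
- exact: B1_subgroup.
- exact: Z1_subgroup.
- by move=> x /Z1_neq0.
- by move=> x [/NM].
- by move=> _ [y [/NM My ->]]; exists y.
- exact: Z1_sqr_B1.
- move=> x [Mx hx]; have [k ok Nxk] := odd_powerN Mx; exists k => //; split=> //.
  by rewrite rmorphXn -exprMn hx expr1n.
- move=> z Zz [y [My ez]]; have [k ok Nyk] := odd_powerN My.
  apply: (subgroup_odd_root (B1_subgroup subN) ok (Z1_neq0 Zz) (Z1_sqr_B1 Zz)).
  by exists (y ^+ k); split=> //; rewrite ez exprMn exprVn rmorphXn.
Qed.

Lemma H2_quot_iso : quot_iso (Z2 s M) (B2 s M) (Z2 s N) (B2 s N).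
Proof.
apply: quot_iso_odd_power; rewrite /Z2 /B2.
- exact: Z2_subgroup.
- exact: B2_subgroup.
- exact: Z2_subgroup.
- by move=> x [/nzM].
- by move=> x [/NM].
- by move=> _ [y [/NM My ->]]; exists y.
- exact: Z2_sqr_B2.
- move=> x [Mx hx]; have [k ok Nxk] := odd_powerN Mx; exists k => //; split=> //.
  by rewrite rmorphXn hx.
- move=> z Zz [y [My ez]]; have [k ok Nyk] := odd_powerN My.
  apply: (subgroup_odd_root (B2_subgroup subN) ok (nzM (NM Zz.1)) (Z2_sqr_B2 Zz)).
  by exists (y ^+ k); split=> //; rewrite ez exprMn rmorphXn.
Qed.

Lemma H_iso_odd_power i : H_iso i s M N.
Proof. by rewrite /H_iso; case: ifP => _; [apply: H1_quot_iso | apply: H2_quot_iso]. Qed.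

End TateCohomology.

Lemma genF_subfield P S : is_subfield (genF P S).
Proof.
split=> [Q [] | Q [] | x y Hx Hy Q subQ PQ SQ | x y Hx Hy Q subQ PQ SQ
        | x Hx nz_x Q subQ PQ SQ] //; case: (subQ) => _ _ QB QM QV.
- by apply: QB; [apply: Hx | apply: Hy].
- by apply: QM; [apply: Hx | apply: Hy].
- by apply: QV => //; apply: Hx.
Qed.

Lemma genF_mono (P P' S S' : algC -> Prop) x :
  (forall y, P y -> P' y) -> (forall y, S y -> S' y) -> genF P S x -> genF P' S' x.
Proof.
move=> PP' SS' Hx Q subQ P'Q S'Q.
by apply: Hx => // y; [move/PP'; apply: P'Q | move/SS'; apply: S'Q].
Qed.

Lemma units_subgroup L : is_subfield L -> is_subgroup (units_of L).
Proof.
case=> _ L1 _ LM LV; split.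
- by split; rewrite ?oner_eq0 ?invr1 ?Aint1.
- move=> x y [Lx nz_x Ax Ax'] [Ly nz_y Ay Ay']; split.
  + exact: LM.
  + exact: mulf_neq0.
  + exact: rpredM.
  + by rewrite invfM; apply: rpredM.
- by move=> x [Lx nz_x Ax Ax']; split; rewrite ?invr_eq0 ?invrK //; apply: LV.
Qed.

Lemma units_of_mono (L L' : algC -> Prop) x :
  (forall y, L y -> L' y) -> units_of L x -> units_of L' x.
Proof. by move=> LL' [Lx ? ? ?]; split=> //; apply: LL'. Qed.

Lemma units_ofN1 L : is_subfield L -> units_of L (-1).
Proof.
case=> L0 L1 LB _ _; split.
- by rewrite -sub0r; apply: LB.
- by rewrite oppr_eq0 oner_eq0.
- by rewrite rpredN Aint1.
- by rewrite invrN1 rpredN Aint1.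
Qed.

Lemma roots_of_unity_odd_power L w : is_subfield L ->
  roots_of_unity L w -> exists2 m, odd m & roots_of_unity2 L (w ^+ m).
Proof.
move=> [_ L1 _ LM _] [Lw [n [n_gt0 wn1]]].
have [m co2m def_n] := pfactor_coprime (isT : prime 2) n_gt0.
exists m; first by rewrite -coprime2n.
split; last by exists (logn 2 n); rewrite -exprM -def_n.
by elim: (m) => [|k IHk]; rewrite ?expr0 // exprS; apply: LM.
Qed.

Lemma units_odd_power (L L' : algC -> Prop) :
  is_subfield L -> is_subfield L' ->
  (forall x, roots_of_unity2 L x -> x = 1 \/ x = -1) ->
  (forall x, units_of L x ->
     exists u w, units_of L' u /\ roots_of_unity L w /\ x = u * w) ->
  forall x, units_of L x -> exists2 k, odd k & units_of L' (x ^+ k).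
Proof.
move=> subL subL' W2 EL x /EL [u [w [E'u [Ww ->]]]].
have [m om /W2 wm] := roots_of_unity_odd_power subL Ww.
exists m => //; have subE' := units_subgroup subL'.
rewrite exprMn; have [_ E'M _] := subE'; apply: E'M; first exact: subgroupX.
by case: wm => ->; [case: subE' | apply: units_ofN1].
Qed.

Theorem proposition3p6
  (F : algC -> Prop) (r : nat) (ds : nat -> nat) (d : nat)
  (tau : {rmorphism algC -> algC}) :
  number_field F -> totally_real F -> abelian_field F ->
  (1 <= r)%N ->
  (forall i, (1 <= i <= r)%N -> [/\ odd (ds i), squarefree (ds i) & (0 < ds i)%N]) ->
  odd d -> squarefree d -> (0 < d)%N ->
  let K := genF F (fun y => (exists2 i, (1 <= i <= r)%N & y = sqrtC (ds i)%:R)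
                            \/ y = sqrtC (- d%:R)) in
  let Kp := genF F (fun y => exists2 i, (1 <= i <= r)%N & y = sqrtC (ds i)%:R) in
  let Kr1 := genF F (fun y => exists2 i, (1 <= i <= r.-1)%N & y = sqrtC (ds i)%:R) in
  let tr := (ds r * d)%N in
  let Kinf := Z2cyc K in
  let Kpinf := Z2cyc Kp in
  ext_degree F K (2 ^ r.+1) ->
  ~ K (sqrtC 2) ->
  (* tau generates G_r = Gal(K_oo / K^(r-1)_oo(sqrt(-t_r))) *)
  (forall x, genF (Z2cyc Kr1) (fun y => y = sqrtC (- tr%:R)) x -> tau x = x) ->
  (exists x, Kinf x /\ tau x != x) ->
  (* W_{K_oo}(2) = {+-1} *)
  (forall x, roots_of_unity2 Kinf x <-> x = 1 \/ x = -1) ->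
  (* (E_{K_oo} : E_{K_oo^+} W_{K_oo}) = 1 *)
  (forall x, units_of Kinf x ->
     exists u w, units_of Kpinf u /\ roots_of_unity Kinf w /\ x = u * w) ->
  H_iso 1 tau (units_of Kinf) (units_of Kpinf) /\
  H_iso 2 tau (units_of Kinf) (units_of Kpinf).
Proof.
(* Only E_{K_oo} = E_{K_oo^+} W_{K_oo} and W_{K_oo}(2) = {+-1} are used. *)
move=> _ _ _ _ _ _ _ _ K Kp Kr1 tr Kinf Kpinf _ _ _ _ W2 EKinf.
have KpK x : Kp x -> K x by apply: genF_mono => // y [i ? ->]; left; exists i.
have KpinfKinf x : Kpinf x -> Kinf x by apply: genF_mono.
have odd_power := units_odd_power (genF_subfield _ _) (genF_subfield _ _)
  (fun x => (W2 x).1) EKinf.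
have H_iso_units i : H_iso i tau (units_of Kinf) (units_of Kpinf).
  apply: (H_iso_odd_power tau _ _ _ _ odd_power).
  - exact/units_subgroup/genF_subfield.
  - exact/units_subgroup/genF_subfield.
  - by move=> x [].
  - by move=> x; apply: units_of_mono.
by split; apply: H_iso_units.
Qed.
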